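(* Let $G$ be a connected graph and $T$ a spanning tree of $G$ rooted in $s$. Then $T$ is an $\mathcal L$-tree of LexDFS on $G$ if and only if $T$ is an $\mathcal L$-tree of CompLexDFS on $G$. Likewise, $T$ is an $\mathcal L$-tree of LexBFS on $G$ if and only if $T$ is an $\mathcal L$-tree of CompLexBFS on $G$.
   Context: Graphs are finite, simple, undirected. LexDFS started at $s$: label $s$ with $(0)$, all others with the empty label; for $i=1,\dots,n$ pick an unnumbered vertex $v$ with lexicographically largest label, set $\sigma(i)=v$, and prepend $i$ to the label of each unnumbered neighbor of $v$. LexBFS started at $s$: label $s$ with $(n)$, others empty; same loop but append $n-i$ to the label of each unnumbered neighbor of $v$. CompLexDFS (resp. CompLexBFS) is the same as LexDFS (resp. LexBFS) except that the choice step becomes: choose a connected component $C$ of the subgraph induced by the unnumbered vertices and pick a vertex of $C$ with lexicographically largest label (among vertices of $C$). A $\mathcal P$-order is any possible output of search $\mathcal P$. The $\mathcal L$-tree of a vertex order $(v_1,\dots,v_n)$ is the spanning tree rooted at $v_1$ with an edge from each $v_i$ ($i>1$) to its rightmost neighbor $v_j$ with $j<i$. A spanning tree $T$ rooted at $s$ is an $\mathcal L$-tree of $\mathcal P$ on $G$ if some $\mathcal P$-order of $G$ starting at $s$ has $\mathcal L$-tree $T$ (same edge set and root). *)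

(* Simple graphs: symmetric irreflexive relation on a finType. *)
From mathcomp Require Import all_boot.
Set Implicit Arguments. Unset Strict Implicit. Unset Printing Implicit Defensive.

Section Defs.
Variable T : finType.

Fixpoint lex_le (a b : seq nat) : bool :=
  match a, b with
  | [::], _ => true
  | _ :: _, [::] => false
  | x :: a', y :: b' => (x < y) || ((x == y) && lex_le a' b')
  end.

(* Label of vertex v once the vertices of the prefix p have been numbered
   (p = [:: sigma(1); ...; sigma(i)], position j in p has number j.+1). *)

(* LexDFS: start label (0) for s; number k is prepended when the k-th vertex
   is a neighbour, so the numbers appear in decreasing order. *)
Definition lexdfs_label (e : rel T) (s : T) (p : seq T) (v : T) : seq nat :=
  rev [seq j.+1 | j <- iota 0 (size p) & e (nth v p j) v]
  ++ (if v == s then [:: 0] else [::]).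

(* LexBFS: start label (n) for s; n - k is appended when the k-th vertex is
   a neighbour. *)
Definition lexbfs_label (e : rel T) (s : T) (p : seq T) (v : T) : seq nat :=
  (if v == s then [:: #|T|] else [::])
  ++ [seq #|T| - j.+1 | j <- iota 0 (size p) & e (nth v p j) v].

Definition unnumbered_rel (e : rel T) (p : seq T) : rel T :=
  fun x y => [&& e x y, x \notin p & y \notin p].

Definition lex_choice (lab : seq T -> T -> seq nat) (p : seq T) (v : T) : Prop :=
  v \notin p /\ forall w, w \notin p -> lex_le (lab p w) (lab p v).

(* Component step: v is an unnumbered vertex whose label is largest among the
   vertices of its connected component C in the subgraph induced by the
   unnumbered vertices (choosing C and then such a vertex of C). *)
Definition comp_choice (e : rel T) (lab : seq T -> T -> seq nat)
    (p : seq T) (v : T) : Prop :=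
  v \notin p /\ forall w, w \notin p -> connect (unnumbered_rel e p) v w ->
    lex_le (lab p w) (lab p v).

Definition search_order (choice : seq T -> T -> Prop) (s : T) (sigma : seq T) : Prop :=
  size sigma = #|T| /\ nth s sigma 0 = s /\
  forall i, i < #|T| -> choice (take i sigma) (nth s sigma i).

Definition LexDFS_order (e : rel T) s sigma :=
  search_order (lex_choice (lexdfs_label e s)) s sigma.
Definition CompLexDFS_order (e : rel T) s sigma :=
  search_order (comp_choice e (lexdfs_label e s)) s sigma.
Definition LexBFS_order (e : rel T) s sigma :=
  search_order (lex_choice (lexbfs_label e s)) s sigma.
Definition CompLexBFS_order (e : rel T) s sigma :=
  search_order (comp_choice e (lexbfs_label e s)) s sigma.

(* Edge relation of the L-tree of the order sigma: an edge between v_i (i > 1)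
   and its rightmost earlier neighbour v_j (j < i); 0-based positions here. *)
Definition Ltree_edge (e : rel T) (sigma : seq T) (x y : T) : Prop :=
  exists i j, [/\ j < i, i < size sigma,
    e (nth x sigma j) (nth x sigma i),
    (forall k, j < k < i -> ~~ e (nth x sigma k) (nth x sigma i)) &
    (x = nth x sigma i /\ y = nth x sigma j \/
     x = nth x sigma j /\ y = nth x sigma i)].

Definition acyclic (t : rel T) : Prop :=
  forall c : seq T, uniq c -> 3 <= size c -> ~~ cycle t c.

Definition spanning_tree (e t : rel T) : Prop :=
  [/\ symmetric t, irreflexive t, (forall x y, t x y -> e x y),
      (forall x y, connect t x y) & acyclic t].

Definition is_Ltree (e : rel T) (order : T -> seq T -> Prop) (s : T) (t : rel T) : Prop :=
  exists sigma, order s sigma /\ nth s sigma 0 = s /\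
    forall x y, Ltree_edge e sigma x y <-> t x y.

End Defs.

From Stdlib Require Import Setoid.
From mathcomp Require Import all_boot.
Set Implicit Arguments. Unset Strict Implicit. Unset Printing Implicit Defensive.

(* A CompLex order is turned into a Lex order with the same L-tree, one
   position at a time.  Suppose the prefix p is already a Lex prefix; let x be
   an unnumbered vertex of maximum label and D its component in the graph
   induced by the unnumbered vertices.  Listing the remaining vertices of D
   first and then the other ones, each group in its original order, gives
   again a CompLex order: the label comparisons and the component seen by a
   vertex only involve vertices of its own group, and so do the earlier
   neighbours that determine its L-tree parent.  The first vertex of D has a
   label at least that of x, so it is a Lex choice. *)

Lemma lex_le_refl a : lex_le a a.
Proof. by elim: a => //= x a ->; rewrite eqxx orbT. Qed.

Lemma lex_le_trans a b c : lex_le a b -> lex_le b c -> lex_le a c.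
Proof.
elim: a b c => [|x a IH] [|y b] [|z c] //=.
case/orP=> [lt_xy|/andP[/eqP-> le_ab]]; case/orP=> [lt_yz|/andP[/eqP<- le_bc]].
- by rewrite (ltn_trans lt_xy lt_yz).
- by rewrite lt_xy.
- by rewrite lt_yz.
- by rewrite eqxx (IH _ _ le_ab le_bc) orbT.
Qed.

Lemma lex_le_total a b : lex_le a b || lex_le b a.
Proof.
elim: a b => [|x a IH] [|y b] //=.
by case: (ltngtP x y) => //= _; apply: IH.
Qed.

Lemma lex_le_map (A : Type) (P : pred A) (g g' : A -> nat) (a b : seq A) :
  {in P &, forall x y, (g x < g y) = (g' x < g' y)} -> all P a -> all P b ->
  lex_le (map g a) (map g b) = lex_le (map g' a) (map g' b).
Proof.
move=> gg'; elim: a b => [|x a IH] [|y b] //= /andP[Px Pa] /andP[Py Pb].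
have eq_gg' : (g x == g y) = (g' x == g' y).
  by rewrite !eqn_leq ![g _ <= _]leqNgt ![g' _ <= _]leqNgt (gg' y x) // (gg' x y).
by rewrite gg' // eq_gg' IH.
Qed.

Lemma exists_lex_max (A : eqType) (f : A -> seq nat) (l : seq A) : l != [::] ->
  exists2 u, u \in l & {in l, forall w, lex_le (f w) (f u)}.
Proof.
elim: l => [|x [|y l] IH] // _.
  by exists x; rewrite ?mem_head // => w; rewrite inE => /eqP ->; apply: lex_le_refl.
have [u ul le_u] := IH isT.
have [le_xu|le_ux] := orP (lex_le_total (f x) (f u)).
  exists u; first by rewrite inE ul orbT.
  by move=> w; rewrite inE => /orP[/eqP ->|/le_u].
exists x; first exact: mem_head.
move=> w; rewrite inE => /orP[/eqP ->|/le_u le_wu]; first exact: lex_le_refl.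
exact: lex_le_trans le_wu le_ux.
Qed.

Section SeqFacts.
Variable T : eqType.
Implicit Types (N M C : pred T) (s p l : seq T).

Lemma index_filter_lt N s x y : N x -> N y ->
  (index x (filter N s) < index y (filter N s)) = (index x s < index y s).
Proof.
move=> Nx Ny; elim: s => [|z s IH] //=.
case Nz: (N z) => /=.
  by case: (z == x); case: (z == y); rewrite ?ltnS.
have /negPf-> : z != x by apply: contraFneq Nz => ->.
have /negPf-> : z != y by apply: contraFneq Nz => ->.
by rewrite ltnS.
Qed.

Lemma index_cat_lt p l x y : (x \in p) || (y \in p) ->
  (index x (p ++ l) < index y (p ++ l)) = (index x p < index y p).
Proof.
rewrite !index_cat; case xp: (x \in p); case yp: (y \in p) => //= _.
- by rewrite (memNindex (negbT yp)) index_mem xp ltn_addr // index_mem.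
- rewrite (memNindex (negbT xp)); have := index_mem y p; rewrite yp => lt_y.
  have /negPf-> : ~~ (size p < index y p) by rewrite -leqNgt ltnW.
  by apply/negbTE; rewrite -leqNgt (leq_trans (ltnW lt_y)) ?leq_addr.
Qed.

Lemma filter_filter_in M C s : {in s, forall z, M z -> C z} ->
  filter M (filter C s) = filter M s.
Proof.
move=> MC; rewrite -filter_predI; apply: eq_in_filter => z zs /=.
by case Mz: (M z); rewrite //= (MC z zs Mz).
Qed.

Lemma filter_nil_in M s : {in s, forall z, ~~ M z} -> filter M s = [::].
Proof. by move=> nM; rewrite -(filter_pred0 s); apply: eq_in_filter => z /nM/negPf. Qed.

Lemma filter_cat_pivot C s a v b : filter C s = a ++ v :: b ->
  exists s1 s2, s = s1 ++ v :: s2 /\ filter C s1 = a.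
Proof.
elim: s a => [|x s IH] a /=; first by case: a.
case Cx: (C x).
  case: a => [|y a] /= [<-] E; first by exists [::], s.
  by have [s1 [s2 [-> <-]]] := IH _ E; exists (x :: s1), s2; rewrite /= Cx.
by move=> E; have [s1 [s2 [-> <-]]] := IH _ E; exists (x :: s1), s2; rewrite /= Cx.
Qed.

Lemma filter_iota_index (f : nat -> nat) P p d :
  uniq p ->
  [seq f j | j <- iota 0 (size p) & P (nth d p j)] = [seq f (index x p) | x <- filter P p].
Proof.
move=> up; rewrite -[in filter P p](mkseq_nth d p) /mkseq filter_map -map_comp.
apply/eq_in_map => j; rewrite mem_filter mem_iota => /andP[_ lt_j] /=.
by rewrite index_uniq.
Qed.

End SeqFacts.

Lemma connect_restrict (T : finType) (r1 r2 : rel T) (P : pred T) x y :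
  P x -> (forall a b, P a -> r1 a b -> P b && r2 a b) ->
  connect r1 x y -> connect r2 x y && P y.
Proof.
move=> Px step /connectP[q pq ->]; elim: q x Px pq => [|z q IH] x Px /=.
  by rewrite connect0 Px.
case/andP=> /(step _ _ Px)/andP[Pz r2xz] /(IH z Pz)/andP[cz ->].
by rewrite (connect_trans (connect1 r2xz) cz).
Qed.

Section Valid.
Variable T : Type.
Implicit Types (choice : seq T -> T -> Prop) (s : seq T).

Definition valid choice s := forall q v r, s = q ++ v :: r -> choice q v.

Lemma valid_cons choice x s :
  valid choice (x :: s) <-> choice [::] x /\ valid (fun q => choice (x :: q)) s.
Proof.
rewrite /valid; split=> [vs|[cx vs] [|y q] v r [<- E]] //; last exact: vs E.
by split=> [|q v r E]; [apply: (vs [::] x s) | apply: (vs (x :: q)); rewrite E].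
Qed.

Lemma valid_nil choice : valid choice [::].
Proof. by case. Qed.

Lemma valid_cat choice a b :
  valid choice (a ++ b) <-> valid choice a /\ valid (fun q => choice (a ++ q)) b.
Proof.
elim: a choice => [|x a IH] choice /=.
  by split=> [vb|[]//]; split=> //; apply: valid_nil.
by rewrite !valid_cons IH; split=> [[? []]|[[]]].
Qed.

Lemma valid_rcons choice a v :
  valid choice (rcons a v) <-> valid choice a /\ choice a v.
Proof.
rewrite -cats1 valid_cat valid_cons cats0.
by split=> [[va [cv _]]|[va cv]] //; do !split=> //; apply: valid_nil.
Qed.

End Valid.

Section SearchOrders.
Variable T : finType.
Implicit Types (choice : seq T -> T -> Prop) (s : T) (sg : seq T).

Lemma search_orderP choice s sg :
  search_order choice s sg <-> [/\ size sg = #|T|, nth s sg 0 = s & valid choice sg].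
Proof.
split=> [[sz [s0 cs]]|[sz s0 vs]].
  split=> // q v r E; have := cs (size q).
  rewrite -sz E size_cat /= addnS ltnS leq_addr take_size_cat // nth_cat ltnn subnn.
  by apply.
split=> //; split=> // i lt_i; apply: (vs _ _ (drop i.+1 sg)).
by rewrite -drop_nth ?sz // cat_take_drop.
Qed.

Lemma search_order_sub choice choice' s sg : (forall q v, choice q v -> choice' q v) ->
  search_order choice s sg -> search_order choice' s sg.
Proof. by move=> sub [sz [s0 cs]]; split=> //; split=> // i /cs/sub. Qed.

Lemma valid_uniq choice sg : (forall q v, choice q v -> v \notin q) ->
  valid choice sg -> uniq sg.
Proof.
move=> fresh; elim/last_ind: sg => [//|sg v IH] /valid_rcons[vs cv].
by rewrite rcons_uniq fresh // IH.
Qed.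

Lemma uniq_size_card_mem sg : uniq sg -> size sg = #|T| -> forall x, x \in sg.
Proof.
move=> u sz x; have /subset_cardP Eq : #|sg| = #|T| by rewrite (card_uniqP u).
by rewrite (Eq (subset_predT _)).
Qed.

Lemma size_uniq_le_card sg : uniq sg -> size sg <= #|T|.
Proof. by move/card_uniqP <-; apply: max_card. Qed.

End SearchOrders.

Section Labels.
Variables (T : finType) (e : rel T) (s : T).
Implicit Types (p q : seq T) (N : pred T) (o : option T).

Definition nbhdU v w : pred T := [pred x | e x v || e x w].

Definition local_label_order (lab : seq T -> T -> seq nat) :=
  forall p v w, uniq p -> lex_le (lab p v) (lab p w) =
  lex_le (lab (filter (nbhdU v w) p) v) (lab (filter (nbhdU v w) p) w).

(* Both labels are images under [rank p] of a trace, the sequence of earlier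
   neighbours with [None] standing for the start mark; label comparisons thus
   only depend on the relative order of the neighbours of the two vertices. *)
Definition rank p o := if o is Some x then (index x p).+1 else 0.

Definition opt_in q : pred (option T) :=
  fun o => if o is Some x then x \in q else true.

Lemma rank_filter_lt N p :
  {in opt_in (filter N p) &, forall o1 o2,
    (rank p o1 < rank p o2) = (rank (filter N p) o1 < rank (filter N p) o2)}.
Proof.
move=> [x|] [y|] //=; rewrite /in_mem /= !mem_filter => /andP[Nx _] /andP[Ny _].
by rewrite !ltnS index_filter_lt.
Qed.

Lemma rank_le_size p o : opt_in p o -> rank p o <= size p.
Proof. by case: o => //= x; rewrite index_mem. Qed.

Lemma nbhdU_l v w x : e x v -> nbhdU v w x.
Proof. by rewrite /nbhdU /= => ->. Qed.

Lemma nbhdU_r v w x : e x w -> nbhdU v w x.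
Proof. by rewrite /nbhdU /= orbC => ->. Qed.

Definition dfs_trace p v : seq (option T) :=
  map Some (rev (filter (e^~ v) p)) ++ (if v == s then [:: None] else [::]).

Lemma lexdfs_labelE p v : uniq p -> lexdfs_label e s p v = map (rank p) (dfs_trace p v).
Proof.
move=> up; rewrite /lexdfs_label (filter_iota_index (fun j => j.+1) (e^~ v)) //.
by rewrite map_cat -map_comp map_rev; case: (v == s).
Qed.

Lemma dfs_trace_opt_in p v : all (opt_in p) (dfs_trace p v).
Proof.
rewrite all_cat; apply/andP; split; last by case: (v == s).
by rewrite all_map; apply/allP => x; rewrite mem_rev mem_filter => /andP[].
Qed.

Lemma dfs_trace_filter N p v : (forall x, e x v -> N x) ->
  dfs_trace (filter N p) v = dfs_trace p v.
Proof. by move=> vN; rewrite /dfs_trace filter_filter_in // => x _ /vN. Qed.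

Lemma lexdfs_local : local_label_order (lexdfs_label e s).
Proof.
move=> p v w up; set N := nbhdU v w; have up' := filter_uniq N up.
rewrite !lexdfs_labelE // -[dfs_trace p v](dfs_trace_filter (N := N)); last exact: nbhdU_l.
rewrite -[dfs_trace p w](dfs_trace_filter (N := N)); last exact: nbhdU_r.
by apply: lex_le_map; [apply: rank_filter_lt | apply: dfs_trace_opt_in ..].
Qed.

Definition bfs_trace p v : seq (option T) :=
  (if v == s then [:: None] else [::]) ++ map Some (filter (e^~ v) p).

Lemma lexbfs_labelE p v : uniq p ->
  lexbfs_label e s p v = map (subn #|T| \o rank p) (bfs_trace p v).
Proof.
move=> up; rewrite /lexbfs_label (filter_iota_index (fun j => #|T| - j.+1) (e^~ v)) //.
by rewrite map_cat -map_comp; case: (v == s); rewrite /= ?subn0.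
Qed.

Lemma bfs_trace_opt_in p v : all (opt_in p) (bfs_trace p v).
Proof.
rewrite all_cat; apply/andP; split; first by case: (v == s).
by rewrite all_map; apply/allP => x; rewrite mem_filter => /andP[].
Qed.

Lemma bfs_trace_filter N p v : (forall x, e x v -> N x) ->
  bfs_trace (filter N p) v = bfs_trace p v.
Proof. by move=> vN; rewrite /bfs_trace filter_filter_in // => x _ /vN. Qed.

Lemma opt_in_filter N p o : opt_in (filter N p) o -> opt_in p o.
Proof. by case: o => //= x; rewrite mem_filter => /andP[]. Qed.

Lemma lexbfs_local : local_label_order (lexbfs_label e s).
Proof.
move=> p v w up; set N := nbhdU v w; have up' := filter_uniq N up.
rewrite !lexbfs_labelE // -[bfs_trace p v](bfs_trace_filter (N := N)); last exact: nbhdU_l.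
rewrite -[bfs_trace p w](bfs_trace_filter (N := N)); last exact: nbhdU_r.
apply: lex_le_map; [|exact: bfs_trace_opt_in..].
have rank_le q o : uniq q -> opt_in q o -> rank q o <= #|T|.
  by move=> uq /rank_le_size/leq_trans; apply; apply: size_uniq_le_card.
move=> o1 o2 o1N o2N /=.
have o1p := opt_in_filter o1N; have o2p := opt_in_filter o2N.
by rewrite !ltn_sub2lE ?rank_le // (rank_filter_lt o2N o1N).
Qed.

Lemma lexdfs_label_start w : lex_le (lexdfs_label e s [::] w) (lexdfs_label e s [::] s).
Proof. by rewrite /lexdfs_label /= eqxx; case: (w == s). Qed.

Lemma lexbfs_label_start w : lex_le (lexbfs_label e s [::] w) (lexbfs_label e s [::] s).
Proof. by rewrite /lexbfs_label /= eqxx; case: (w == s) => //=; rewrite ltnn eqxx. Qed.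

End Labels.

Section Parent.
Variables (T : finType) (e : rel T).
Implicit Types (sg p l : seq T).

Definition ltree_parent sg (b a : T) : bool :=
  [&& index a sg < index b sg, e a b &
      [forall z, (index a sg < index z sg < index b sg) ==> ~~ e z b]].

Lemma ltree_parent_prefix p l b a : b \in p ->
  ltree_parent (p ++ l) b a = ltree_parent p b a.
Proof.
move=> bp; rewrite /ltree_parent index_cat_lt ?bp ?orbT //.
congr [&& _, _ & _]; apply: eq_forallb => z.
case zp: (z \in p); first by rewrite !index_cat_lt ?zp ?bp ?orbT.
rewrite (index_cat_lt l (x := z)) ?bp ?orbT //.
have /negPf-> : ~~ (index z p < index b p).
  by rewrite -leqNgt (memNindex (negbT zp)) ltnW // index_mem.
by rewrite !andbF.
Qed.

Lemma ltree_parent_filter (M : pred T) s1 s2 b a : M b -> (forall z, e z b -> M z) ->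
  filter M s1 = filter M s2 -> ltree_parent s1 b a = ltree_parent s2 b a.
Proof.
move=> Mb bM EM; case eab: (e a b); last by rewrite /ltree_parent eab !andbF.
have Ma := bM a eab.
rewrite /ltree_parent -(index_filter_lt s1 Ma Mb) -(index_filter_lt s2 Ma Mb) EM.
congr [&& _, _ & _].
apply: eq_forallb => z; case ezb: (e z b); last by rewrite !implybT.
have Mz := bM z ezb.
by rewrite -(index_filter_lt s1 Ma Mz) -(index_filter_lt s1 Mz Mb)
  -(index_filter_lt s2 Ma Mz) -(index_filter_lt s2 Mz Mb) EM.
Qed.

Lemma ltree_parentP sg d b a : uniq sg -> b \in sg ->
  reflect (exists i j, [/\ j < i, i < size sg, e (nth d sg j) (nth d sg i),
             (forall k, j < k < i -> ~~ e (nth d sg k) (nth d sg i)) &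
             b = nth d sg i /\ a = nth d sg j])
          (ltree_parent sg b a).
Proof.
move=> u bs; apply: (iffP idP) => [/and3P[lt_ab eab /forallP nz]|].
  have as_ : a \in sg by rewrite -index_mem (leq_trans lt_ab) ?index_size.
  exists (index b sg), (index a sg); rewrite !nth_index ?index_mem //; split=> //.
  move=> k /andP[jk ki]; have ks : k < size sg by rewrite (ltn_trans ki) ?index_mem.
  by have /implyP := nz (nth d sg k); rewrite index_uniq // jk ki; apply.
case=> i [j [ji isz eji nk [-> ->]]]; have jsz := ltn_trans ji isz.
rewrite /ltree_parent !index_uniq // ji eji /=; apply/forallP => z; apply/implyP.
move=> /andP[jz zi]; have zs : z \in sg by rewrite -index_mem (ltn_trans zi).
by have := nk (index z sg); rewrite nth_index // jz zi; apply.
Qed.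

Lemma Ltree_edge_parent sg x y : uniq sg -> (forall z, z \in sg) ->
  Ltree_edge e sg x y <-> ltree_parent sg x y \/ ltree_parent sg y x.
Proof.
move=> u sgT; split.
  case=> i [j [ji isz eji nk [[xE yE]|[yE xE]]]]; [left|right];
  by apply/(ltree_parentP x _ u (sgT _)); exists i, j.
by case=> /(ltree_parentP x _ u (sgT _)) [i [j [ji isz eji nk [xE yE]]]];
  exists i, j; split=> //; [left|right].
Qed.

End Parent.

Section Regroup.
Variables (T : finType) (e : rel T) (lab : seq T -> T -> seq nat).
Hypothesis lab_local : local_label_order e lab.
Variable p : seq T.
Implicit Types (C D : pred T) (X q r : seq T).

(* [C] is a union of components of the graph induced off [p]. *)
Definition component_closed C :=
  forall x y, x \notin p -> y \notin p -> e x y -> C x = C y.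

Lemma component_closedC C : component_closed C -> component_closed (predC C).
Proof. by move=> Ccl x y xp yp exy /=; rewrite (Ccl x y). Qed.

Lemma comp_choice_regroup C X r1 v :
  component_closed C -> C v -> {in X, forall x, (x \notin p) && ~~ C x} ->
  uniq (p ++ r1) -> uniq (p ++ X ++ filter C r1) ->
  comp_choice e lab (p ++ r1) v -> comp_choice e lab (p ++ X ++ filter C r1) v.
Proof.
move=> Ccl Cv XnC u u' [vq cv]; set q := p ++ r1; set q' := p ++ X ++ filter C r1.
have r1p : {in r1, forall x, x \notin p}.
  by move: u; rewrite cat_uniq => /and3P[_ /hasPn].
have [vp vr1] : v \notin p /\ v \notin r1 by move: vq; rewrite mem_cat negb_or => /andP.
have off_q x : C x -> x \notin q' -> x \notin q.
  by move=> Cx; rewrite !mem_cat mem_filter Cx !negb_or => /and3P[-> _ ->].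
have vq' : v \notin q'.
  rewrite !mem_cat mem_filter Cv (negPf vp) (negPf vr1) orbF /=.
  by apply/negP => /XnC; rewrite Cv andbF.
split=> // w wq' vw.
have /andP[vw_q Cw] : connect (unnumbered_rel e q) v w && C w.
  apply: connect_restrict Cv _ vw => a b Ca /and3P[eab aq' bq'].
  have [ap bp] : a \notin p /\ b \notin p.
    by move: aq' bq'; rewrite !mem_cat !negb_or => /andP[-> _] /andP[-> _].
  have Cb : C b by rewrite -(Ccl a b ap bp eab).
  by rewrite Cb /unnumbered_rel eab !off_q.
have wp : w \notin p by move: wq'; rewrite mem_cat negb_or => /andP[].
have NC x : x \notin p -> nbhdU e w v x -> C x.
  by move=> xp /orP[exw|exv]; [rewrite (Ccl x w) | rewrite (Ccl x v)].
have EN : filter (nbhdU e w v) q' = filter (nbhdU e w v) q.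
  rewrite !filter_cat (filter_nil_in (s := X)) ?filter_filter_in //.
    by move=> x /r1p /NC.
  by move=> x /XnC /andP[xp]; apply: contra; apply: NC.
rewrite lab_local ?filter_uniq // EN -lab_local //.
exact: cv w (off_q w Cw wq') vw_q.
Qed.

Variables (r : seq T) (D : pred T).
Hypotheses (pr_uniq : uniq (p ++ r)) (D_closed : component_closed D).

Lemma notin_prefix x : x \in r -> x \notin p.
Proof. by move: pr_uniq; rewrite cat_uniq => /and3P[_ /hasPn nrp _] /nrp. Qed.

Lemma perm_regroup : perm_eq (p ++ filter D r ++ filter (predC D) r) (p ++ r).
Proof. by rewrite perm_cat2l perm_filterC. Qed.

Lemma valid_regroup : valid (comp_choice e lab) (p ++ r) ->
  valid (comp_choice e lab) (p ++ filter D r ++ filter (predC D) r).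
Proof.
move=> /valid_cat[vp vr].
have u' : uniq (p ++ filter D r ++ filter (predC D) r) by rewrite (perm_uniq perm_regroup).
have choice_at C X q v b : component_closed C -> {in X, forall x, (x \notin p) && ~~ C x} ->
    uniq (p ++ X ++ filter C r) -> filter C r = q ++ v :: b ->
    comp_choice e lab (p ++ X ++ q) v.
  move=> Ccl XnC uX E; have [r1 [r2 [Er Eq]]] := filter_cat_pivot E.
  have Cv : C v by have := mem_filter C v r; rewrite E mem_cat mem_head orbT => /esym/andP[].
  rewrite -Eq; apply: comp_choice_regroup => //; last exact: vr Er.
    by move: pr_uniq; rewrite Er catA cat_uniq => /andP[].
  by move: uX; rewrite E Eq !catA cat_uniq -!catA => /andP[].
apply/valid_cat; split=> //; apply/valid_cat; split=> q v b E.
  apply: (choice_at D [::]) E => //.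
  by move: u'; rewrite catA cat_uniq => /andP[].
apply: (choice_at (predC D)) E => //; first exact: component_closedC.
by move=> x; rewrite mem_filter negbK => /andP[-> /notin_prefix ->].
Qed.

Lemma ltree_parent_regroup b a : b \in p ++ r ->
  ltree_parent e (p ++ filter D r ++ filter (predC D) r) b a = ltree_parent e (p ++ r) b a.
Proof.
case bp: (b \in p); first by rewrite !ltree_parent_prefix.
rewrite mem_cat bp /= => br; pose M := [pred z | e z b || (z == b)].
apply: (ltree_parent_filter (M := M)); [by rewrite /= eqxx orbT | by move=> z /= -> |].
have M_D : {in r, forall z, M z -> D z = D b}.
  move=> z zr /orP[ezb|/eqP-> //].
  by apply: D_closed ezb; rewrite ?bp // notin_prefix.
rewrite !filter_cat; congr (_ ++ _).
case Db: (D b).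
  rewrite (filter_nil_in (s := filter (predC D) r)) ?cats0 ?filter_filter_in //.
    by move=> z zr /(M_D z zr) ->.
  move=> z; rewrite mem_filter => /andP[nDz /M_D MD].
  by apply/negP => /MD; rewrite Db (negPf nDz).
rewrite (filter_nil_in (s := filter D r)) ?filter_filter_in //.
  by move=> z zr /(M_D z zr) /= ->; rewrite Db.
move=> z; rewrite mem_filter => /andP[Dz /M_D MD].
by apply/negP => /MD; rewrite Dz Db.
Qed.

End Regroup.

Section Relex.
Variables (T : finType) (e : rel T) (lab : seq T -> T -> seq nat).
Hypotheses (e_sym : symmetric e) (lab_local : local_label_order e lab).

Lemma relex_step p r : uniq (p ++ r) -> (forall x, x \in p ++ r) ->
  valid (comp_choice e lab) (p ++ r) -> valid (lex_choice lab) p -> r != [::] ->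
  exists v r', [/\ perm_eq (v :: r') r, valid (comp_choice e lab) (rcons p v ++ r'),
    valid (lex_choice lab) (rcons p v) &
    forall b a, ltree_parent e (rcons p v ++ r') b a = ltree_parent e (p ++ r) b a].
Proof.
move=> u prT vc vl rn; have [x xr le_x] := exists_lex_max (lab p) rn.
pose U := unnumbered_rel e p; pose D : pred T := connect U x.
have U_sym : symmetric U.
  by move=> y z; rewrite /U /unnumbered_rel e_sym (andbC (y \notin p)).
have D_closed : component_closed e p D.
  move=> y z yp zp eyz; apply/idP/idP => Dy; apply: connect_trans Dy (connect1 _);
  by rewrite /U /unnumbered_rel ?eyz 1?e_sym ?eyz yp zp.
have : x \in filter D r by rewrite mem_filter /D connect0.
case Ar: (filter D r) => [//|v A] _; exists v, (A ++ filter (predC D) r).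
have sgE : rcons p v ++ (A ++ filter (predC D) r) = p ++ filter D r ++ filter (predC D) r.
  by rewrite cat_rcons Ar.
have vc' : valid (comp_choice e lab) (rcons p v ++ (A ++ filter (predC D) r)).
  by rewrite sgE; apply: valid_regroup.
have Dv : D v by have := mem_head v A; rewrite -Ar mem_filter => /andP[].
split=> //.
- by rewrite -cat_cons -Ar perm_filterC.
- have /valid_cat[/valid_rcons[_ [vp cv]] _] := vc'.
  apply/valid_rcons; split=> //; split=> // w wp.
  apply: lex_le_trans (le_x w _) (cv x (notin_prefix u xr) _).
    by move: (prT w); rewrite mem_cat (negPf wp).
  by rewrite (sym_connect_sym U_sym).
- by move=> b a; rewrite sgE ltree_parent_regroup.
Qed.

Lemma relex p r : uniq (p ++ r) -> (forall x, x \in p ++ r) ->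
  valid (comp_choice e lab) (p ++ r) -> valid (lex_choice lab) p ->
  exists2 r', perm_eq r' r & valid (lex_choice lab) (p ++ r') /\
    forall b a, ltree_parent e (p ++ r') b a = ltree_parent e (p ++ r) b a.
Proof.
have [n] := ubnP (size r); elim: n p r => // n IH p r lt_r u prT vc vl.
have [->|rn] := eqVneq r [::]; first by exists [::]; rewrite ?cats0.
have [v [r' [pr vc' vl' par']]] := relex_step u prT vc vl rn.
have pE : perm_eq (rcons p v ++ r') (p ++ r) by rewrite cat_rcons perm_cat2l.
have lt_r' : size r' < n by move: lt_r; rewrite -(perm_size pr).
have u' : uniq (rcons p v ++ r') by rewrite (perm_uniq pE).
have prT' x : x \in rcons p v ++ r' by rewrite (perm_mem pE).
have [r'' pr' [vl'' par'']] := IH _ _ lt_r' u' prT' vc' vl'.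
exists (v :: r''); first by rewrite (perm_trans _ pr) // perm_cons.
by rewrite -cat_rcons; split=> // b a; rewrite par'' par'.
Qed.

Lemma comp_to_lex_order s sg : (forall w, lex_le (lab [::] w) (lab [::] s)) ->
  search_order (comp_choice e lab) s sg ->
  exists2 sg', search_order (lex_choice lab) s sg' &
    forall x y, Ltree_edge e sg' x y <-> Ltree_edge e sg x y.
Proof.
move=> start /search_orderP[sz s0 vc].
have u : uniq sg by apply: valid_uniq vc => q v [].
have sgT := uniq_size_card_mem u sz.
case: sg s0 sz vc u sgT => [_ _ _ _ /(_ s)//|_ r /= -> sz vc u sgT].
have vl : valid (lex_choice lab) [:: s].
  by apply/(valid_rcons _ [::]); split; [apply: valid_nil | split=> // w _; apply: start].
have [r' pr [vl' par]] := relex (p := [:: s]) u sgT vc vl.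
have pE : perm_eq (s :: r') (s :: r) by rewrite perm_cons.
exists (s :: r'); first by apply/search_orderP; rewrite (perm_size pE).
have u' : uniq (s :: r') by rewrite (perm_uniq pE).
have sgT' z : z \in s :: r' by rewrite (perm_mem pE).
by move=> x y; rewrite !Ltree_edge_parent // !par.
Qed.

End Relex.

Lemma is_Ltree_lex_comp (T : finType) (e : rel T) (lab : T -> seq T -> T -> seq nat)
    (s : T) (t : rel T) :
  symmetric e -> local_label_order e (lab s) ->
  (forall w, lex_le (lab s [::] w) (lab s [::] s)) ->
  is_Ltree e (fun s => search_order (lex_choice (lab s)) s) s t <->
  is_Ltree e (fun s => search_order (comp_choice e (lab s)) s) s t.
Proof.
move=> e_sym loc start; split=> -[sg [so [s0 Et]]].
  exists sg; split=> //; apply: search_order_sub so => q v [vq le_v].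
  by split=> // w wq _; apply: le_v.
have [sg' so' E'] := comp_to_lex_order e_sym loc start so.
exists sg'; split=> //; split; first by case: so' => _ [].
by move=> x y; rewrite E'.
Qed.

Theorem lemma14 (T : finType) (e : rel T) (s : T) (t : rel T) :
  symmetric e -> irreflexive e -> (forall x y, connect e x y) ->
  spanning_tree e t ->
  (is_Ltree e (LexDFS_order e) s t <-> is_Ltree e (CompLexDFS_order e) s t) /\
  (is_Ltree e (LexBFS_order e) s t <-> is_Ltree e (CompLexBFS_order e) s t).
Proof.
move=> e_sym _ _ _; split.
  apply: (is_Ltree_lex_comp (lab := lexdfs_label e)) e_sym _ _.
    exact: lexdfs_local.
  exact: lexdfs_label_start.
apply: (is_Ltree_lex_comp (lab := lexbfs_label e)) e_sym _ _.
  exact: lexbfs_local.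
exact: lexbfs_label_start.
Qed.
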